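(* Let $k_1,k_2$ be integers with $k_2\ge k_1\ge 1$. Then the submodule $\mathcal{J}^{12}$ of $\mathcal{F}$ generated by $\{R_{12}^{n_1,n_2,n_3}: n_1,n_2,n_3\in\mathbb{Z}\}$ is generated by $$J^{12}_{\min}=J^{12}_{(k_1,\infty),[0,\infty)}\cup J^{12}_{(\frac{k_1}{2},k_1],(\frac{k_2}{2},\infty)}\cup J^{12}_{[0,\frac{k_1}{2}],[\frac{k_2}{2},\infty)}.$$
   Context: $\mathcal{F}$ is the free $\mathbb{Z}[A^{\pm1}]$-module with basis the symbols $s_1^{l_1}s_2^{l_2}s_3^{l_3}$, $l_i\ge 0$, extended multilinearly to integer exponents by $s_i^{-1}=0$ and $s_i^{n}=-s_i^{-n-2}$ for $n\le -2$. For $n_i\in\mathbb{Z}$, $R_{12}(n_1,n_2,n_3)=-A^{-n_1-n_2-2}s_1^{n_1}s_2^{n_2}s_3^{n_3}-A^{-n_1-n_2+2}s_1^{n_1-2}s_2^{n_2-2}s_3^{n_3}-A^{-n_1-n_2}s_1^{n_1-1}s_2^{n_2-1}s_3^{n_3+1}-A^{-n_1-n_2}s_1^{n_1-1}s_2^{n_2-1}s_3^{n_3-1}$ and $R_{12}^{n_1,n_2,n_3}=R_{12}(n_1,n_2,n_3)-R_{12}(-n_1+k_1,-n_2+k_2,n_3)$. For subsets $I_1,I_2\subseteq\mathbb{R}$, $J^{12}_{I_1,I_2}=\{R^{n_1,n_2,n_3}_{12}: n_1\in I_1\cap\mathbb{Z},\ n_2\in I_2\cap\mathbb{Z},\ n_3\in\mathbb{Z}_{\ge0}\}$.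 *)

From HB Require Import structures.
From mathcomp Require Import all_boot all_order all_algebra.
Set Implicit Arguments. Unset Strict Implicit. Unset Printing Implicit Defensive.
Import Order.TTheory GRing.Theory Num.Theory.
Local Open Scope ring_scope.

(* The free Z[A^{+-1}]-module F with basis s1^l1 s2^l2 s3^l3 (l_i >= 0) is
   modelled (as an abelian group) as the free Z-module with basis
   A^e s1^l1 s2^l2 s3^l3 (e : int); an element is its coefficient function.
   We work inside the ambient group of all such coefficient functions;
   every element of F (finite support) is one of them, and the
   submodules considered below consist only of finitely supported ones. *)
Definition vec := int -> nat -> nat -> nat -> int.

Definition vzero : vec := fun _ _ _ _ => 0.
Definition vadd (x y : vec) : vec := fun e a b c => x e a b c + y e a b c.
Definition vopp (x : vec) : vec := fun e a b c => - x e a b c.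
Definition vsub (x y : vec) : vec := vadd x (vopp y).
Definition vshiftA (f : int) (x : vec) : vec := fun e a b c => x (e - f) a b c.

(* extension of s^n to integer exponents:
   s^n = s^n (n >= 0), s^{-1} = 0, s^n = - s^{-n-2} (n <= -2).
   Returns (sign, exponent) or None for the zero case. *)
Definition ext (n : int) : option (int * nat) :=
  match n with
  | Posz m => Some (1, m)
  | Negz 0 => None
  | Negz m.+1 => Some (-1, m)
  end.

(* the element c * A^e * s1^n1 s2^n2 s3^n3, extended multilinearly *)
Definition mon (c e n1 n2 n3 : int) : vec :=
  fun e' a b d =>
    match ext n1, ext n2, ext n3 with
    | Some (t1, m1), Some (t2, m2), Some (t3, m3) =>
        if [&& e' == e, a == m1, b == m2 & d == m3]
        then c * t1 * t2 * t3 else 0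
    | _, _, _ => 0
    end.

Definition R12 (n1 n2 n3 : int) : vec :=
  vadd (vadd (mon (-1) (- n1 - n2 - 2) n1 n2 n3)
             (mon (-1) (- n1 - n2 + 2) (n1 - 2) (n2 - 2) n3))
       (vadd (mon (-1) (- n1 - n2) (n1 - 1) (n2 - 1) (n3 + 1))
             (mon (-1) (- n1 - n2) (n1 - 1) (n2 - 1) (n3 - 1))).

Definition R12s (k1 k2 n1 n2 n3 : int) : vec :=
  vsub (R12 n1 n2 n3) (R12 (- n1 + k1) (- n2 + k2) n3).

(* J^{12}_{I1,I2}, with I1, I2 intervals of Q (all intervals occurring have
   rational endpoints) *)
Definition J12 (k1 k2 : int) (I1 I2 : interval rat) (v : vec) : Prop :=
  exists n1 n2 n3 : int,
    [/\ (n1%:~R : rat) \in I1, (n2%:~R : rat) \in I2, 0 <= n3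
      & v = R12s k1 k2 n1 n2 n3].

Definition Rall (k1 k2 : int) (v : vec) : Prop :=
  exists n1 n2 n3 : int, v = R12s k1 k2 n1 n2 n3.

Definition Jmin (k1 k2 : int) (v : vec) : Prop :=
  J12 k1 k2 `]k1%:~R, +oo[ `[0, +oo[ v \/
  J12 k1 k2 `](k1%:~R / 2), k1%:~R] `](k2%:~R / 2), +oo[ v \/
  J12 k1 k2 `[0, k1%:~R / 2] `[k2%:~R / 2, +oo[ v.

Inductive gen_submod (S : vec -> Prop) : vec -> Prop :=
  | gsm_gen x : S x -> gen_submod S x
  | gsm0 : gen_submod S vzero
  | gsmD x y : gen_submod S x -> gen_submod S y -> gen_submod S (vadd x y)
  | gsmN x : gen_submod S x -> gen_submod S (vopp x)
  | gsmA f x : gen_submod S x -> gen_submod S (vshiftA f x).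

From HB Require Import structures.
From mathcomp Require Import all_boot all_order all_algebra.
From mathcomp Require Import zify ring.
From Stdlib Require Import FunctionalExtensionality.
Set Implicit Arguments. Unset Strict Implicit. Unset Printing Implicit Defensive.
Import Order.TTheory GRing.Theory Num.Theory.
Local Open Scope ring_scope.

(* Writing s^n as x^(n+1) - x^(-n-1) identifies F with the Laurent series in
   A, x, y, z that are odd in each of x, y, z; [oddpart] is the projection.
   Let L_(s,t) ([skein s t]) be multiplication by
   A^-2 x^s y^t + A^2 x^-s y^-t + z + z^-1 and theta the involution of
   exponents induced by (n1, n2) -> (k1 - n1, k2 - n2).  Then R_12^(n1,n2,n3)
   is, up to sign and a power of A, the odd part of L_(1,1) (m - theta m) for
   m = x^n1 y^n2 z^(n3+1).
   If g is invariant under y -> 1/y and theta g under x -> 1/x, the odd part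
   of L_(1,1) (h - theta h) vanishes for h = L_(1,-1) g, since L_(1,1) h and
   L_(1,1) (theta h) = L_(1,1) L_(-1,1) (theta g) are then even in y,
   resp. in x.  Expanding h into monomials gives a linear relation between
   the R_12; for a suitable g it expresses the generator whose (n1, n2) lies
   furthest below the region n1 > k1, n2 >= 0 through generators closer to
   it.  Induction on that distance, the symmetries n -> theta n and
   n3 -> -n3 - 2, and R_12^(n1,n2,-1) = 0 reduce every generator to J_min. *)

(* Replaces atoms [h y1 y2 y3 y4] on the right by atoms [h x1 x2 x3 x4] of the
   left whose arguments are equal by [lia]. *)
Ltac match_args h :=
  repeat match goal with
  | |- ?L = ?R =>
    match L with context [h ?x1 ?x2 ?x3 ?x4] =>
    lazymatch R with context [h x1 x2 x3 x4] => fail | _ => idtac end;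
    match R with context [h ?y1 ?y2 ?y3 ?y4] =>
      lazymatch L with context [h y1 y2 y3 y4] => fail | _ => idtac end;
      replace (h y1 y2 y3 y4) with (h x1 x2 x3 x4) by (f_equal; lia)
    end end end.

Ltac funext4 :=
  let e := fresh "e" in let a := fresh "a" in let b := fresh "b" in let c := fresh "c" in
  extensionality e; extensionality a; extensionality b; extensionality c.

(* [f e a b c] is the coefficient of A^e x^a y^b z^c. *)
Definition laurent := int -> int -> int -> int -> int.

Definition lzero : laurent := fun _ _ _ _ => 0.
Definition ladd (f g : laurent) : laurent := fun e a b c => f e a b c + g e a b c.
Definition lopp (f : laurent) : laurent := fun e a b c => - f e a b c.
Definition lsub (f g : laurent) : laurent := ladd f (lopp g).

Definition lmono (e0 a0 b0 c0 : int) : laurent :=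
  fun e a b c => (e == e0)%:R * (a == a0)%:R * (b == b0)%:R * (c == c0)%:R.

Definition ltrans (de da db dc : int) (f : laurent) : laurent :=
  fun e a b c => f (e - de) (a - da) (b - db) (c - dc).

Definition lflipx (f : laurent) : laurent := fun e a b c => f e (- a) b c.
Definition lflipy (f : laurent) : laurent := fun e a b c => f e a (- b) c.
Definition lflipz (f : laurent) : laurent := fun e a b c => f e a b (- c).

Definition skein (s t : int) (f : laurent) : laurent :=
  ladd (ltrans (-2) s t 0 f) (ladd (ltrans 2 (- s) (- t) 0 f)
    (ladd (ltrans 0 0 0 1 f) (ltrans 0 0 0 (-1) f))).

Definition theta (k1 k2 : int) (f : laurent) : laurent :=
  fun e a b c => f (e + 2 * a + 2 * b - (k1 + k2)) (k1 - a) (k2 - b) c.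

Lemma ltransD de da db dc : {morph ltrans de da db dc : f g / ladd f g}. Proof. by []. Qed.
Lemma ltrans0 de da db dc : ltrans de da db dc lzero = lzero. Proof. by []. Qed.
Lemma lflipxD : {morph lflipx : f g / ladd f g}. Proof. by []. Qed.
Lemma lflipyD : {morph lflipy : f g / ladd f g}. Proof. by []. Qed.
Lemma thetaD k1 k2 : {morph theta k1 k2 : f g / ladd f g}. Proof. by []. Qed.

Lemma eq_indicator (x y u v : int) :
  (x = y <-> u = v) -> (x == y)%:R = (u == v)%:R :> int.
Proof. by move=> xyuv; case: eqP => ?; case: eqP => ? //; tauto. Qed.

Lemma ltrans_mono de da db dc e a b c :
  ltrans de da db dc (lmono e a b c) = lmono (e + de) (a + da) (b + db) (c + dc).
Proof.
by funext4; rewrite /ltrans /lmono; congr (_ * _ * _ * _); apply: eq_indicator; lia.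
Qed.

Lemma lflipx_mono e a b c : lflipx (lmono e a b c) = lmono e (- a) b c.
Proof.
by funext4; rewrite /lflipx /lmono; congr (_ * _ * _ * _); apply: eq_indicator; lia.
Qed.

Lemma lflipy_mono e a b c : lflipy (lmono e a b c) = lmono e a (- b) c.
Proof.
by funext4; rewrite /lflipy /lmono; congr (_ * _ * _ * _); apply: eq_indicator; lia.
Qed.

Lemma lflipz_mono e a b c : lflipz (lmono e a b c) = lmono e a b (- c).
Proof.
by funext4; rewrite /lflipz /lmono; congr (_ * _ * _ * _); apply: eq_indicator; lia.
Qed.

Lemma theta_mono k1 k2 e a b c :
  theta k1 k2 (lmono e a b c) =
  lmono (e + 2 * a + 2 * b - (k1 + k2)) (k1 - a) (k2 - b) c.
Proof. by funext4; rewrite /theta /lmono; repeat case: eqP => ? /=; lia. Qed.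

Lemma lflipx_skein s t f : lflipx (skein s t f) = skein (- s) t (lflipx f).
Proof. funext4; rewrite /lflipx /skein /ladd /ltrans; match_args f; ring. Qed.

Lemma lflipy_skein s t f : lflipy (skein s t f) = skein s (- t) (lflipy f).
Proof. funext4; rewrite /lflipy /skein /ladd /ltrans; match_args f; ring. Qed.

Lemma lflipz_skein s t f : lflipz (skein s t f) = skein s t (lflipz f).
Proof. funext4; rewrite /lflipz /skein /ladd /ltrans; match_args f; ring. Qed.

Lemma skeinC s t s' t' f : skein s t (skein s' t' f) = skein s' t' (skein s t f).
Proof. funext4; rewrite /skein /ladd /ltrans; match_args f; ring. Qed.

Lemma theta_skein_flip k1 k2 f :
  theta k1 k2 (skein 1 (-1) f) = skein (-1) 1 (theta k1 k2 f).
Proof. funext4; rewrite /theta /skein /ladd /ltrans; match_args f; ring. Qed.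

Definition oddpart (f : laurent) : vec := fun e a b c =>
  let A := Posz a.+1 in let B := Posz b.+1 in let C := Posz c.+1 in
  f e A B C - f e (- A) B C - f e A (- B) C + f e (- A) (- B) C
  - f e A B (- C) + f e (- A) B (- C) + f e A (- B) (- C) - f e (- A) (- B) (- C).

Lemma oddpartD f g : oddpart (ladd f g) = vadd (oddpart f) (oddpart g).
Proof. by funext4; rewrite /oddpart /ladd /vadd /=; ring. Qed.

Lemma oddpart_flipx f : oddpart (lflipx f) = vopp (oddpart f).
Proof. by funext4; rewrite /oddpart /lflipx /vopp /= !opprK; ring. Qed.

Lemma oddpart_flipy f : oddpart (lflipy f) = vopp (oddpart f).
Proof. by funext4; rewrite /oddpart /lflipy /vopp /= !opprK; ring. Qed.

Lemma oddpart_flipz f : oddpart (lflipz f) = vopp (oddpart f).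
Proof. by funext4; rewrite /oddpart /lflipz /vopp /= !opprK; ring. Qed.

Lemma vopp_inj v w : vopp v = vopp w -> v = w.
Proof.
move=> vw; funext4; have := congr1 (fun u => u e a b c) vw.
by rewrite /vopp; lia.
Qed.

Lemma vopp_fixed v : vopp v = v -> v = vzero.
Proof.
move=> vN; funext4; have := congr1 (fun w => w e a b c) vN.
by rewrite /vopp /vzero; lia.
Qed.

Lemma oddpart_flipx_fixed f : lflipx f = f -> oddpart f = vzero.
Proof. by move=> fx; apply: vopp_fixed; rewrite -oddpart_flipx fx. Qed.

Lemma oddpart_flipy_fixed f : lflipy f = f -> oddpart f = vzero.
Proof. by move=> fy; apply: vopp_fixed; rewrite -oddpart_flipy fy. Qed.

Definition odd_coef (a : nat) (p : int) : int :=
  (a.+1%:Z == p)%:R - (- a.+1%:Z == p)%:R.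

Lemma odd_coef_ext (a : nat) (n : int) : odd_coef a (n + 1) =
  if ext n is Some (t, m) then (if a == m then t else 0) else 0.
Proof. by rewrite /odd_coef; case: n => [m|[|m]] /=; repeat case: eqP => /= ?; lia. Qed.

Lemma oddpart_mono e p q r e' a b d :
  oddpart (lmono e p q r) e' a b d =
  (e' == e)%:R * odd_coef a p * odd_coef b q * odd_coef d r.
Proof. by rewrite /oddpart /lmono /odd_coef /=; ring. Qed.

Lemma mon_oddpart c e n1 n2 n3 e' a b d :
  mon c e n1 n2 n3 e' a b d =
  c * oddpart (lmono e (n1 + 1) (n2 + 1) (n3 + 1)) e' a b d.
Proof.
rewrite oddpart_mono !odd_coef_ext /mon.
case: (ext n1) => [[t1 m1]|]; case: (ext n2) => [[t2 m2]|];
  case: (ext n3) => [[t3 m3]|]; by repeat case: eqP => /= _; ring.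
Qed.

Lemma R12_skein n1 n2 n3 :
  R12 n1 n2 n3 = vopp (oddpart (skein 1 1 (lmono (- n1 - n2) n1 n2 (n3 + 1)))).
Proof.
funext4; rewrite /R12 /skein !ltrans_mono !oddpartD /vadd /vopp !mon_oddpart.
by match_args lmono; ring.
Qed.

Definition rel12 (k1 k2 : int) (f : laurent) : vec :=
  oddpart (skein 1 1 (lsub f (theta k1 k2 f))).

Lemma rel12E k1 k2 f :
  rel12 k1 k2 f = vsub (oddpart (skein 1 1 f)) (oddpart (skein 1 1 (theta k1 k2 f))).
Proof.
by funext4; rewrite /rel12 /oddpart /skein /vsub /vadd /vopp /lsub /ladd /lopp /ltrans /=; ring.
Qed.

Lemma rel12D k1 k2 f g :
  rel12 k1 k2 (ladd f g) = vadd (rel12 k1 k2 f) (rel12 k1 k2 g).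
Proof.
by funext4; rewrite !rel12E /oddpart /skein /vsub /vadd /vopp /ladd /ltrans /theta /=; ring.
Qed.

Lemma rel12_0 k1 k2 : rel12 k1 k2 lzero = vzero.
Proof.
by funext4; rewrite rel12E /oddpart /skein /vsub /vadd /vopp /vzero /ladd /ltrans /lzero /=; ring.
Qed.

Lemma rel12_flipz k1 k2 f : rel12 k1 k2 (lflipz f) = vopp (rel12 k1 k2 f).
Proof. by rewrite /rel12 -oddpart_flipz lflipz_skein. Qed.

Lemma rel12_shiftA k1 k2 d f :
  rel12 k1 k2 (ltrans d 0 0 0 f) = vshiftA d (rel12 k1 k2 f).
Proof.
funext4; rewrite !rel12E /oddpart /skein /vsub /vadd /vopp /vshiftA /ladd /ltrans /theta /=.
by match_args f; ring.
Qed.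

Lemma rel12_R12s k1 k2 n1 n2 n3 :
  rel12 k1 k2 (lmono (- n1 - n2) n1 n2 (n3 + 1)) = vopp (R12s k1 k2 n1 n2 n3).
Proof.
rewrite rel12E /R12s !R12_skein theta_mono; funext4; rewrite /vsub /vadd /vopp.
by match_args lmono; ring.
Qed.

Lemma rel12_mono k1 k2 e a b c :
  rel12 k1 k2 (lmono e a b c) = vshiftA (e + a + b) (vopp (R12s k1 k2 a b (c - 1))).
Proof.
have -> : lmono e a b c = ltrans (e + a + b) 0 0 0 (lmono (- a - b) a b (c - 1 + 1)).
  by rewrite ltrans_mono; congr lmono; ring.
by rewrite rel12_shiftA rel12_R12s.
Qed.

Lemma rel12_skein_flip k1 k2 g :
  lflipy g = g -> lflipx (theta k1 k2 g) = theta k1 k2 g ->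
  rel12 k1 k2 (skein 1 (-1) g) = vzero.
Proof.
move=> gy thx; rewrite rel12E theta_skein_flip.
rewrite (@oddpart_flipy_fixed (skein 1 1 _)); last by rewrite !lflipy_skein opprK gy skeinC.
rewrite (@oddpart_flipx_fixed (skein 1 1 _)); last by rewrite !lflipx_skein opprK thx skeinC.
by funext4; rewrite /vsub /vadd /vopp /vzero subr0.
Qed.

Lemma R12s_theta k1 k2 n1 n2 n3 :
  R12s k1 k2 n1 n2 n3 = vopp (R12s k1 k2 (- n1 + k1) (- n2 + k2) n3).
Proof.
rewrite /R12s.
have -> : - (- n1 + k1) + k1 = n1 by ring.
have -> : - (- n2 + k2) + k2 = n2 by ring.
by funext4; rewrite /vsub /vadd /vopp; ring.
Qed.

Lemma R12s_flipz k1 k2 n1 n2 n3 :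
  R12s k1 k2 n1 n2 (- n3 - 2) = vopp (R12s k1 k2 n1 n2 n3).
Proof.
apply: vopp_inj; rewrite -!rel12_R12s -rel12_flipz lflipz_mono.
by congr (rel12 _ _ (lmono _ _ _ _)); ring.
Qed.

Lemma R12s_m1 k1 k2 n1 n2 : R12s k1 k2 n1 n2 (-1) = vzero.
Proof. by apply: vopp_fixed; rewrite -R12s_flipz. Qed.

(* seed k1 a b c = A^(-2k1) x^k1 (A^-2a x^a + A^2a x^-a) (y^-b + y^b) z^c, where
   the second term of a factor is dropped when it repeats the first, so that
   every monomial has coefficient 1. *)
Definition sym_x (k1 a : int) (f : laurent) : laurent :=
  ladd (ltrans (- 2 * a - 2 * k1) (k1 + a) 0 0 f)
       (if a == 0 then lzero else ltrans (2 * a - 2 * k1) (k1 - a) 0 0 f).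

Definition sym_y (b : int) (f : laurent) : laurent :=
  ladd (ltrans 0 0 (- b) 0 f) (if b == 0 then lzero else ltrans 0 0 b 0 f).

Definition seed (k1 a b c : int) : laurent := sym_x k1 a (sym_y b (lmono 0 0 0 c)).

Lemma lflipy_seed k1 a b c : lflipy (seed k1 a b c) = seed k1 a b c.
Proof.
rewrite /seed /sym_x /sym_y; case: eqP => [->|_]; case: eqP => [->|_] /=;
  rewrite ?ltransD ?ltrans0 !ltrans_mono ?lflipyD !lflipy_mono;
  by funext4; rewrite /ladd /lzero; match_args lmono; ring.
Qed.

Lemma lflipx_theta_seed k1 k2 a b c :
  lflipx (theta k1 k2 (seed k1 a b c)) = theta k1 k2 (seed k1 a b c).
Proof.
rewrite /seed /sym_x /sym_y; case: eqP => [->|_]; case: eqP => [->|_] /=;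
  rewrite ?ltransD ?ltrans0 !ltrans_mono ?thetaD !theta_mono;
  rewrite ?lflipxD !lflipx_mono;
  by funext4; rewrite /ladd /lzero; match_args lmono; ring.
Qed.

Lemma gen_submod_shiftAN (P : vec -> Prop) d v :
  gen_submod P (vshiftA d (vopp v)) <-> gen_submod P v.
Proof.
split=> [h|h]; last exact/gsmA/gsmN.
have -> : v = vopp (vshiftA (- d) (vshiftA d (vopp v))).
  by funext4; rewrite /vopp /vshiftA !opprK addrK.
exact/gsmN/gsmA.
Qed.

Lemma gen_submod_sub (P Q : vec -> Prop) :
  (forall v, P v -> gen_submod Q v) -> forall v, gen_submod P v -> gen_submod Q v.
Proof.
move=> PQ v; elim=> [x /PQ //| | x y _ | x _ | f x _]; by constructor.
Qed.

Lemma int_halfr_lt (x y : int) : ((x%:~R : rat) / 2 < y%:~R) = (x < y * 2).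
Proof. by rewrite ltr_pdivrMr // -[2]/(2%:~R) -intrM ltr_int. Qed.

Lemma int_halfr_le (x y : int) : ((x%:~R : rat) / 2 <= y%:~R) = (x <= y * 2).
Proof. by rewrite ler_pdivrMr // -[2]/(2%:~R) -intrM ler_int. Qed.

Lemma int_le_halfr (x y : int) : ((y%:~R : rat) <= x%:~R / 2) = (y * 2 <= x).
Proof. by rewrite ler_pdivlMr // -[2]/(2%:~R) -intrM ler_int. Qed.

Section Generation.

Variables k1 k2 : int.
Hypothesis k1_gt0 : 1 <= k1.
Hypothesis k1_le_k2 : k1 <= k2.

Local Notation S := (gen_submod (Jmin k1 k2)).

Definition spanned (f : laurent) : Prop := S (rel12 k1 k2 f).

Lemma spannedD f g : spanned f -> spanned g -> spanned (ladd f g).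
Proof. by rewrite /spanned rel12D; apply: gsmD. Qed.

Lemma spanned_cancelr f g : spanned (ladd f g) -> spanned g -> spanned f.
Proof.
rewrite /spanned rel12D => /gsmD fg /gsmN /fg; congr S.
by funext4; rewrite /vadd /vopp addrK.
Qed.

Lemma spanned0 : spanned lzero.
Proof. by rewrite /spanned rel12_0; apply: gsm0. Qed.

Lemma spanned_mono e a b c :
  spanned (lmono e a b c) <-> S (R12s k1 k2 a b (c - 1)).
Proof. by rewrite /spanned rel12_mono gen_submod_shiftAN. Qed.

Lemma spanned_skein_seed a b c : spanned (skein 1 (-1) (seed k1 a b c)).
Proof.
by rewrite /spanned rel12_skein_flip ?lflipy_seed ?lflipx_theta_seed //; apply: gsm0.
Qed.

Definition band (m n1 n2 : int) : Prop :=
  (k1 < n1 -> - m <= n2) /\ (n1 < 0 -> n2 <= k2 + m).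

Ltac spanned_leaves IH :=
  repeat case: eqP => ? /=; rewrite ?ltransD ?ltrans0 ?ltrans_mono;
  repeat match goal with
  | |- spanned (ladd _ _) => apply: spannedD
  | |- spanned lzero => exact: spanned0
  | |- spanned (lmono _ _ _ _) => apply/spanned_mono; apply: IH; split; lia
  end.

Lemma R12s_span_below_band (a m n3 : int) : 0 <= a -> 0 <= m ->
    (forall n1 n2 n3, band m n1 n2 -> S (R12s k1 k2 n1 n2 n3)) ->
  S (R12s k1 k2 (k1 + a + 1) (- m - 1) n3).
Proof.
move=> a_ge0 m_ge0 IH.
suff : spanned (ltrans (-2) 1 (-1) 0 (ltrans (- 2 * a - 2 * k1) (k1 + a) 0 0
               (ltrans 0 0 (- m) 0 (lmono 0 0 0 (n3 + 1))))).
  by rewrite !ltrans_mono spanned_mono; congr S; congr R12s; ring.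
have := spanned_skein_seed a m (n3 + 1).
rewrite /skein /seed /sym_x /sym_y !ltransD => seed_rel.
(* every other monomial of the relation has its (n1, n2) in [band m] *)
apply: spanned_cancelr (spanned_cancelr (spanned_cancelr seed_rel _) _) _.
all: spanned_leaves IH.
Qed.

Lemma R12s_span_right n1 n2 n3 :
  k1 < n1 -> 0 <= n2 -> 0 <= n3 -> S (R12s k1 k2 n1 n2 n3).
Proof.
move=> n1_gt n2_ge0 n3_ge0; apply: gsm_gen; left; exists n1, n2, n3.
by rewrite !in_itv /= ltr_int !ler0z !andbT; split.
Qed.

Lemma R12s_span_upper n1 n2 n3 :
  k1 < n1 * 2 -> n1 <= k1 -> k2 < n2 * 2 -> 0 <= n3 -> S (R12s k1 k2 n1 n2 n3).
Proof.
move=> n1_gt n1_le n2_gt n3_ge0; apply: gsm_gen; right; left; exists n1, n2, n3.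
by rewrite !in_itv /= !int_halfr_lt ler_int n1_gt n1_le n2_gt andbT; split.
Qed.

Lemma R12s_span_lower n1 n2 n3 :
  0 <= n1 -> n1 * 2 <= k1 -> k2 <= n2 * 2 -> 0 <= n3 -> S (R12s k1 k2 n1 n2 n3).
Proof.
move=> n1_ge0 n1_le n2_ge n3_ge0; apply: gsm_gen; right; right; exists n1, n2, n3.
by rewrite !in_itv /= int_le_halfr int_halfr_le ler0z n1_ge0 n1_le n2_ge andbT; split.
Qed.

Lemma R12s_span_theta n1 n2 n3 :
  S (R12s k1 k2 (- n1 + k1) (- n2 + k2) n3) -> S (R12s k1 k2 n1 n2 n3).
Proof. by move=> h; rewrite R12s_theta; apply: gsmN. Qed.

Lemma R12s_span_band0_ge0 n1 n2 n3 :
  band 0 n1 n2 -> 0 <= n3 -> S (R12s k1 k2 n1 n2 n3).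
Proof.
move=> [right_ge left_le] n3_ge0.
have [n1_gt|n1_le] := ltrP k1 n1.
  by apply: R12s_span_right => //; have := right_ge n1_gt; lia.
have [n1_lt0|n1_ge0] := ltrP n1 0.
  apply: R12s_span_theta; apply: R12s_span_right => //; first lia.
  by have := left_le n1_lt0; lia.
have [n1_up|n1_low] := ltrP k1 (n1 * 2).
  have [n2_up|n2_low] := ltrP k2 (n2 * 2); first exact: R12s_span_upper.
  by apply: R12s_span_theta; apply: R12s_span_lower => //; lia.
have [n2_up|n2_low] := lerP k2 (n2 * 2); first exact: R12s_span_lower.
apply: R12s_span_theta; have [n1'_up|n1'_low] := ltrP k1 ((- n1 + k1) * 2).
  by apply: R12s_span_upper => //; lia.
by apply: R12s_span_lower => //; lia.
Qed.

Lemma R12s_span_band0 n1 n2 n3 : band 0 n1 n2 -> S (R12s k1 k2 n1 n2 n3).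
Proof.
move=> b0; have [n3_ge0|n3_lt0] := lerP 0 n3; first exact: R12s_span_band0_ge0.
have [->|n3_neq] := eqVneq n3 (-1); first by rewrite R12s_m1; apply: gsm0.
have -> : n3 = - (- n3 - 2) - 2 by ring.
by rewrite R12s_flipz; apply/gsmN/R12s_span_band0_ge0 => //; lia.
Qed.

Lemma R12s_span_band (m : nat) n1 n2 n3 : band m n1 n2 -> S (R12s k1 k2 n1 n2 n3).
Proof.
elim: m n1 n2 n3 => [|m IH] n1 n2 n3 [right_ge left_le]; first exact: R12s_span_band0.
have [n1_gt|n1_le] := ltrP k1 n1.
  have [n2_ge|n2_lt] := lerP (- m%:Z) n2; first by apply: IH; split => ?; lia.
  have := @R12s_span_below_band (n1 - k1 - 1) m n3 ltac:(lia) ltac:(lia) IH.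
  by congr S; congr R12s; lia.
have [n1_lt0|n1_ge0] := ltrP n1 0; last by apply: IH; split => ?; lia.
have [n2_le|n2_gt] := lerP n2 (k2 + m%:Z); first by apply: IH; split => ?; lia.
apply: R12s_span_theta.
have := @R12s_span_below_band (- n1 - 1) m n3 ltac:(lia) ltac:(lia) IH.
by congr S; congr R12s; lia.
Qed.

Lemma R12s_span n1 n2 n3 : S (R12s k1 k2 n1 n2 n3).
Proof. by apply: (@R12s_span_band (absz n2 + absz k2)); split; lia. Qed.

End Generation.

Theorem proposition4p1 (k1 k2 : int) :
  1 <= k1 -> k1 <= k2 ->
  forall v : vec, gen_submod (Rall k1 k2) v <-> gen_submod (Jmin k1 k2) v.
Proof.
move=> k1_gt0 k1_le_k2 v; split; apply: gen_submod_sub => {}v.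
  by move=> [n1 [n2 [n3 ->]]]; apply: R12s_span.
by move=> [|[|]] [n1 [n2 [n3 [_ _ _ ->]]]]; apply: gsm_gen; exists n1, n2, n3.
Qed.
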